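(* Let $d\ge 2$, $n\ge d+2$, and let $\mathcal{F}$, $B_i$, $\mathcal{X}_v$ be as in the context. For every $v\in[n]$, the family $\mathcal{X}_v\subseteq\binom{[n]\setminus\{v\}}{d}$ has VC-dimension at most $d-1$; consequently $|\mathcal{X}_v|\le\binom{n-1}{d-1}$.
   Context: Let $\mathcal{F}=\{F_1,\dots,F_m\}\subseteq\binom{[n]}{d+1}$ consist of distinct sets and have VC-dimension at most $d$ (no $(d+1)$-set $S$ is shattered, i.e. no $S$ such that every $A\subseteq S$ equals $F\cap S$ for some $F\in\mathcal{F}$). For $i\in[m]$, call $B\subsetneq F_i$ admissible for $F_i$ if $F\cap F_i\neq B$ for every $F\in\mathcal{F}$ (admissible sets exist by the VC-dimension assumption). For each $i$, $B_i$ is a fixed admissible set for $F_i$ of maximum cardinality among all admissible sets for $F_i$. For $v\in[n]$, $\mathcal{X}_v:=\{F_k\setminus\{v\}: k\in[m],\ v\in B_k\}$. *)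

From mathcomp Require Import all_boot.
Set Implicit Arguments. Unset Strict Implicit. Unset Printing Implicit Defensive.

Definition shatters (T : finType) (Fam : {set {set T}}) (S : {set T}) : Prop :=
  forall A : {set T}, A \subset S -> exists2 F, F \in Fam & F :&: S = A.

Definition vc_dim_le (T : finType) (Fam : {set {set T}}) (k : nat) : Prop :=
  forall S : {set T}, #|S| = k.+1 -> ~ shatters Fam S.

Definition admissible (n m : nat) (F : 'I_m -> {set 'I_n}) (i : 'I_m)
    (B : {set 'I_n}) : Prop :=
  B \proper F i /\ forall k : 'I_m, F k :&: F i != B.

Definition Xfam (n m : nat) (F B : 'I_m -> {set 'I_n}) (v : 'I_n)
    : {set {set 'I_n}} :=
  [set F k :\ v | k in [set k : 'I_m | v \in B k]].

From mathcomp Require Import all_boot all_algebra zify.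
Set Implicit Arguments. Unset Strict Implicit. Unset Printing Implicit Defensive.
Import GRing.Theory Num.Theory.
Local Open Scope ring_scope.

(* If X_v shattered a d-set S, the
   trace S itself would force S = F_k \ v with v \in B_k, and the trace
   B_k \ v would then give F_j :&: F_k = B_k for some j, contradicting the
   admissibility of B_k.
   The bound is the Frankl-Pach theorem: a k-uniform family on U shattering
   no k-set has at most 'C(#|U|, k.-1) members. Otherwise there are more
   members than (k-1)-subsets of U, so some nonzero weight f on the family
   has vanishing sums over the members containing any (k-1)-set; double
   counting pushes this vanishing down to all smaller sets, and Moebius
   inversion over the subsets of a member F0 with f F0 != 0 shows that every
   trace on F0 carries total weight +-f F0, so F0 is shattered. *)

Lemma exists_rV_mulmx_eq0 (K : fieldType) (m n : nat) (M : 'M[K]_(m, n)) :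
  (n < m)%N -> exists2 u : 'rV_m, u != 0 & u *m M = 0.
Proof.
move=> ltnm; have : kermx M != 0.
  by rewrite kermx_eq0; apply: contraTN ltnm => /eqP <-; rewrite -leqNgt rank_leq_col.
by case/rowV0Pn=> u /sub_kermxP uM u0; exists u.
Qed.

Definition up_weight (R : nmodType) (T : finType) (Fam : {set {set T}})
    (f : {set T} -> R) (G : {set T}) : R :=
  \sum_(F in Fam | G \subset F) f F.

Lemma exists_up_weight_eq0 (K : fieldType) (T : finType) (Fam Cs : {set {set T}}) :
  (#|Cs| < #|Fam|)%N ->
  exists f : {set T} -> K, (exists2 F0, F0 \in Fam & f F0 != 0) /\
    {in Cs, forall G, up_weight Fam f G = 0}.
Proof.
move=> ltCsFam; have /card_gt0P[F0 F0Fam] := leq_ltn_trans (leq0n _) ltCsFam.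
pose M := \matrix_(i < #|Fam|, j < #|Cs|)
  (enum_val j \subset enum_val i)%:R : 'M[K]_(#|Fam|, #|Cs|).
have [u u0 uM] := exists_rV_mulmx_eq0 M ltCsFam.
exists (fun F => u 0 (enum_rank_in F0Fam F)); split.
  have /existsP[i ui0] : [exists i, u 0 i != 0].
    by apply: contraR u0 => /existsPn ui0; apply/eqP/rowP => i; rewrite mxE; apply/eqP/negbNE.
  by exists (enum_val i); rewrite ?enum_valP ?enum_valK_in.
move=> G GCs; rewrite /up_weight big_enum_val_cond /=.
under eq_bigr do rewrite enum_valK_in.
have := congr1 (fun w : 'rV_#|Cs| => w 0 (enum_rank_in GCs G)) uM.
rewrite !mxE => {2}<-; rewrite big_mkcond; apply: eq_bigr => i _.
by rewrite /M mxE enum_rankK_in //; case: ifP; rewrite ?mulr1 ?mulr0.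
Qed.

Lemma sum_sign_interval (R : pzRingType) (T : finType) (A F0 : {set T}) :
  A \proper F0 ->
  \sum_(B : {set T} | (A \subset B) && (B \subset F0)) (-1) ^+ #|F0 :\: B| = 0 :> R.
Proof.
case/properP=> AF0 [x xF0 xA].
have PxU B : (A \subset x |: B) && (x |: B \subset F0) = (A \subset B) && (B \subset F0).
  rewrite subUset sub1set xF0 -subDset; congr andb.
  by rewrite (setDidPl _) // disjoint_sym disjoints1.
have sign_xU (B : {set T}) : x \notin B -> #|F0 :\: B| = #|F0 :\: (x |: B)|.+1.
  by move=> xB; rewrite setUC -setDDl [LHS](cardsD1 x) !inE xB xF0 add1n.
rewrite (bigID (fun B : {set T} => x \in B)) /=.
rewrite (reindex_onto (fun B : {set T} => x |: B) (fun B : {set T} => B :\ x)) /=; last first.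
  by move=> B /andP[_ xB]; apply: setD1K.
have xUK (B : {set T}) : ((x |: B) :\ x == B) = (x \notin B).
  by apply/eqP/idP => [<-|/setU1K//]; rewrite !inE eqxx.
under eq_bigl do rewrite PxU setU11 andbT xUK.
rewrite -big_split /=; apply: big1 => B /andP[_ xB].
by rewrite (sign_xU B xB) exprS mulN1r addrN.
Qed.

Section UpWeight.

Variables (R : numFieldType) (T : finType) (Fam : {set {set T}}) (f : {set T} -> R).

Definition trace_weight (F0 A : {set T}) : R := \sum_(F in Fam | F :&: F0 == A) f F.

Lemma up_weight_trace (A F0 : {set T}) : A \subset F0 ->
  up_weight Fam f A =
  \sum_(B : {set T} | (A \subset B) && (B \subset F0)) trace_weight F0 B.
Proof.
move=> AF0; rewrite /up_weight (partition_big (fun F => F :&: F0)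
  (fun B => (A \subset B) && (B \subset F0))) => [|F /andP[_ AF]]; last first.
  by rewrite subsetI AF AF0 subsetIr.
apply: eq_bigr => B /andP[AB _]; apply: eq_bigl => F; move: AB.
rewrite andbAC; case: eqP => [<-|_]; last by rewrite !andbF.
by rewrite subsetI => /andP[-> _]; rewrite !andbT.
Qed.

Variable k : nat.
Hypothesis Fam_card : {in Fam, forall F : {set T}, #|F| = k}.

Lemma trace_weight_id (F0 : {set T}) : F0 \in Fam -> trace_weight F0 F0 = f F0.
Proof.
move=> F0Fam; rewrite /trace_weight -(big_pred1_eq _ F0 f : \sum_(F | F == F0) f F = _).
apply: eq_bigl => F.
apply/andP/eqP => [[FFam /eqP/setIidPr F0F]|->]; last by rewrite F0Fam setIid.
by apply/esym/eqP; rewrite eqEcard F0F (Fam_card FFam) (Fam_card F0Fam) leqnn.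
Qed.

(* Moebius inversion on the interval [A, F0], downward in A. *)
Lemma trace_weight_sign (F0 : {set T}) : F0 \in Fam ->
    (forall A : {set T}, A \proper F0 -> up_weight Fam f A = 0) ->
  forall A : {set T}, A \subset F0 -> trace_weight F0 A = (-1) ^+ #|F0 :\: A| * f F0.
Proof.
move=> F0Fam up0 A; have [s] := ubnP #|F0 :\: A|; elim: s A => // s IH A ltAs AF0.
have [->|neAF0] := eqVneq A F0; first by rewrite trace_weight_id // setDv cards0 mul1r.
have ltAF0 : A \proper F0 by rewrite properEneq neAF0.
have := up0 A ltAF0; rewrite (up_weight_trace AF0) (bigD1 A) ?subxx ?AF0 //=.
rewrite (eq_bigr (fun B => (-1) ^+ #|F0 :\: B| * f F0)) => [|B]; last first.
  case/andP=> /andP[AB BF0] neBA; apply: (IH B _ BF0).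
  have ltAB : A \proper B by rewrite properEneq eq_sym neBA.
  have := proper_card ltAB; have := subset_leq_card BF0.
  rewrite !cardsD (setIidPr BF0) (setIidPr AF0) in ltAs *; lia.
rewrite -mulr_suml; have := sum_sign_interval R ltAF0.
rewrite (bigD1 A) ?subxx ?AF0 //= addrC => /eqP; rewrite addr_eq0 => /eqP ->.
by rewrite mulNr; apply: subr0_eq.
Qed.

Lemma shatters_of_up_weight (F0 : {set T}) : F0 \in Fam -> f F0 != 0 ->
  (forall A : {set T}, A \proper F0 -> up_weight Fam f A = 0) -> shatters Fam F0.
Proof.
move=> F0Fam fF0 up0 A AF0.
have : trace_weight F0 A != 0.
  by rewrite (trace_weight_sign F0Fam up0 AF0) mulf_neq0 // expf_neq0 // oppr_eq0 oner_eq0.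
rewrite /trace_weight.
have [F /andP[FFam /eqP FA]|noF] := pickP [pred F | (F \in Fam) && (F :&: F0 == A)].
  by exists F.
by rewrite big_pred0 ?eqxx.
Qed.

Variable U : {set T}.
Hypothesis Fam_sub : {in Fam, forall F : {set T}, F \subset U}.

(* Each member F \supset G is counted once for every x \in F :\: G. *)
Lemma sum_up_weight_setU1 (G : {set T}) : G \subset U ->
  \sum_(x in U :\: G) up_weight Fam f (x |: G) = up_weight Fam f G *+ (k - #|G|).
Proof.
move=> GU; rewrite /up_weight -sumrMnl.
rewrite (exchange_big_dep (fun F => (F \in Fam) && (G \subset F))) /=; last first.
  by move=> x F _ /andP[-> xGF]; rewrite (subset_trans (subsetUr _ _) xGF).
apply: eq_bigr => F /andP[FFam GF].
have cardFG : #|F :\: G| = (k - #|G|)%N by rewrite cardsD (setIidPr GF) Fam_card.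
rewrite -cardFG -sumr_const; apply: eq_bigl => x.
rewrite !inE FFam subUset sub1set GF andbT /=.
by case xF: (x \in F); rewrite ?andbF // !andbT (subsetP (Fam_sub FFam) x xF) andbT.
Qed.

Lemma up_weight_eq0_below :
    (forall G : {set T}, G \subset U -> #|G| = k.-1 -> up_weight Fam f G = 0) ->
  forall G : {set T}, G \subset U -> (#|G| < k)%N -> up_weight Fam f G = 0.
Proof.
move=> top G; have [s] := ubnP (k - #|G|); elim: s G => // s IH G ltGs GU ltGk.
have [Gk|/eqP neGk] := eqVneq #|G| k.-1; first exact: top.
have := sum_up_weight_setU1 GU; rewrite big1 => [/esym/eqP|x].
  by rewrite mulrn_eq0 subn_eq0 leqNgt ltGk => /eqP.
rewrite inE => /andP[xG xU].
apply: IH; rewrite ?subUset ?sub1set ?xU ?GU // cardsU1 xG; lia.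
Qed.

End UpWeight.

Theorem frankl_pach (T : finType) (U : {set T}) (k : nat) (Fam : {set {set T}}) :
    {in Fam, forall F : {set T}, F \subset U} -> {in Fam, forall F : {set T}, #|F| = k} ->
    (forall S : {set T}, #|S| = k -> ~ shatters Fam S) ->
  (#|Fam| <= 'C(#|U|, k.-1))%N.
Proof.
move=> Fam_sub Fam_card noshat; rewrite leqNgt -(cards_draws U); apply/negP => ltCsFam.
have [f [[F0 F0Fam fF0] up0]] := exists_up_weight_eq0 rat ltCsFam.
apply: (noshat F0 (Fam_card F0 F0Fam)).
apply: (shatters_of_up_weight Fam_card F0Fam fF0) => A ltAF0.
apply: (up_weight_eq0_below Fam_card Fam_sub) => [G GU Gk||].
- by apply: up0; rewrite inE GU Gk eqxx.
- exact: subset_trans (proper_sub ltAF0) (Fam_sub F0 F0Fam).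
- by rewrite -(Fam_card F0 F0Fam) proper_card.
Qed.

Local Close Scope ring_scope.

Section Xfam.

Variables (d n m : nat) (F B : 'I_m -> {set 'I_n}) (v : 'I_n).
Hypothesis F_card : forall i, #|F i| = d.+1.
Hypothesis B_adm : forall i, admissible F i (B i).

Lemma mem_F_of_B i : v \in B i -> v \in F i.
Proof. exact/subsetP/proper_sub/(B_adm i).1. Qed.

Lemma card_F_setD1 i : v \in B i -> #|F i :\ v| = d.
Proof. by move/mem_F_of_B => vF; have := cardsD1 v (F i); rewrite vF F_card add1n => -[]. Qed.

Lemma Xfam_card X : X \in Xfam F B v -> #|X| = d /\ v \notin X.
Proof. by case/imsetP=> i; rewrite inE => vB ->; rewrite card_F_setD1 // !inE eqxx. Qed.

Lemma Xfam_not_shatters (S : {set 'I_n}) : #|S| = d -> ~ shatters (Xfam F B v) S.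
Proof.
move=> Sd shS.
have [X /imsetP[i]] := shS S (subxx S); rewrite inE => vBi -> FiS.
have SE : S = F i :\ v.
  by apply/eqP; rewrite eqEcard -{1}FiS subsetIl Sd card_F_setD1 ?leqnn.
have BS : B i :\ v \subset S by rewrite SE setSD // proper_sub // (B_adm i).1.
have [Y /imsetP[j]] := shS _ BS; rewrite inE => vBj ->.
rewrite SE -setDIl => FjiB.
have vFji : v \in F j :&: F i by rewrite inE (mem_F_of_B vBj) (mem_F_of_B vBi).
by have := (B_adm i).2 j; rewrite -(setD1K vFji) FjiB setD1K ?eqxx.
Qed.

End Xfam.

Theorem claim3p3 (d n m : nat) (F B : 'I_m -> {set 'I_n}) :
  2 <= d -> d + 2 <= n ->
  injective F ->
  (forall i, #|F i| = d.+1) ->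
  vc_dim_le [set F i | i in 'I_m] d ->
  (forall i, admissible F i (B i)) ->
  (forall i (B' : {set 'I_n}), admissible F i B' -> #|B'| <= #|B i|) ->
  forall v : 'I_n,
    (forall X, X \in Xfam F B v -> #|X| = d /\ v \notin X) /\
    vc_dim_le (Xfam F B v) d.-1 /\
    #|Xfam F B v| <= 'C(n.-1, d.-1).
Proof.
move=> d_ge2 _ _ F_card _ B_adm _ v.
have X_card := Xfam_card F_card B_adm (v := v).
have X_noshat := Xfam_not_shatters F_card B_adm (v := v).
split=> //; split; first by move=> S; rewrite prednK ?(ltnW d_ge2) //; apply: X_noshat.
have -> : n.-1 = #|[set~ v]| by rewrite cardsC1 card_ord.
apply: frankl_pach => [X /X_card[_ vX]|X /X_card[]//|//].
by rewrite subsetC sub1set inE.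
Qed.
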